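(* Let $\mathfrak{R}$ be either the finite field $\mathbb{F}_q$ ($q$ a prime power) or the ring $\mathbb{Z}_k$ ($k\ge 2$), and let $\chi$ be the character of $\mathfrak{R}$ described in the context. Let $C$ and $D$ be two $\mathfrak{R}$-linear codes of length $n$ and let $\bm{w}\in\mathfrak{R}^n$. Then \[ \mathfrak{Jac}(C,D^{\perp},\bm{w}; x_{a} : a \in \mathfrak{R}^{3}) =\frac{1}{|D|}\,\mathfrak{Jac}\Big(C,D,\bm{w};\ \sum_{b\in\mathfrak{R}}\chi(a_2 b)\,x_{(a_1,b,a_3)} : a=(a_1,a_2,a_3)\in\mathfrak{R}^{3}\Big), \] where the right-hand side means the polynomial $\mathfrak{Jac}(C,D,\bm{w};x_a : a\in\mathfrak{R}^3)$ with each variable $x_{(a_1,a_2,a_3)}$ replaced by $\sum_{b\in\mathfrak{R}}\chi(a_2 b)\,x_{(a_1,b,a_3)}$.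
   Context: An $\mathbb{F}_q$-linear code of length $n$ is a subspace of $\mathbb{F}_q^n$; a $\mathbb{Z}_k$-linear code of length $n$ is an additive subgroup of $\mathbb{Z}_k^n$. For $\bm{u},\bm{v}\in\mathfrak{R}^n$, $\bm{u}\cdot\bm{v}=\sum_i u_iv_i$, and the dual code is $C^\perp=\{\bm{v}\in\mathfrak{R}^n : \bm{u}\cdot\bm{v}=0 \text{ for all }\bm{u}\in C\}$. The character $\chi:\mathfrak{R}\to\mathbb{C}^\times$ is defined as follows. If $\mathfrak{R}=\mathbb{F}_q$ with $q=p^f$, $p$ prime, fix a root $\lambda$ of a primitive irreducible polynomial of degree $f$ over $\mathbb{F}_p$, write each $\alpha\in\mathbb{F}_q$ uniquely as $\alpha=\alpha_0+\alpha_1\lambda+\cdots+\alpha_{f-1}\lambda^{f-1}$ with $\alpha_i\in\mathbb{F}_p$, and set $\chi(\alpha)=\zeta_p^{\alpha_0}$ where $\zeta_p$ is a primitive $p$-th root of unity. If $\mathfrak{R}=\mathbb{Z}_k$, set $\chi(\alpha)=\zeta_k^{\alpha}$ with $\zeta_k$ a primitive $k$-th root of unity. For $\bm{u},\bm{v},\bm{w}\in\mathfrak{R}^n$ and $a\in\mathfrak{R}^3$, let $h_a(\bm{u},\bm{v};\bm{w})=\#\{i : (u_i,v_i,w_i)=a\}$. The complete joint Jacobi polynomial of $\mathfrak{R}$-linear codes $C,D$ of length $n$ with respect to $\bm{w}$ is the polynomial in the $|\mathfrak{R}|^3$ variables $x_a$ ($a\in\mathfrak{R}^3$) \[\mathfrak{Jac}(C,D,\bm{w};x_a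 : a\in\mathfrak{R}^3)=\sum_{\bm{u}\in C,\ \bm{v}\in D}\ \prod_{a\in\mathfrak{R}^3}x_a^{h_a(\bm{u},\bm{v};\bm{w})}.\] *)

From HB Require Import structures.
From mathcomp Require Import all_boot all_order all_algebra all_field.
From mathcomp Require Import mpoly.
Set Implicit Arguments. Unset Strict Implicit. Unset Printing Implicit Defensive.
Import GRing.Theory Num.Theory.
Local Open Scope ring_scope.

Section Jacobi.
Variables (R : finComNzRingType) (n : nat).

Definition dotv (u v : 'rV[R]_n) : R := \sum_(i < n) u 0 i * v 0 i.

Definition dual_code (C : {set 'rV[R]_n}) : {set 'rV[R]_n} :=
  [set v | [forall u in C, dotv u v == 0]].

Definition hcount (a : R * R * R) (u v w : 'rV[R]_n) : nat :=
  #|[set i : 'I_n | (u 0 i, v 0 i, w 0 i) == a]|.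

Definition nvar := #|{: R * R * R}|.

Definition xvar (a : R * R * R) : {mpoly algC[nvar]} := 'X_(enum_rank a).

Definition Jac (C D : {set 'rV[R]_n}) (w : 'rV[R]_n) : {mpoly algC[nvar]} :=
  \sum_(u in C) \sum_(v in D) \prod_(a : R * R * R) xvar a ^+ hcount a u v w.

Definition subst_vars (s : R * R * R -> {mpoly algC[nvar]})
    (p : {mpoly algC[nvar]}) : {mpoly algC[nvar]} :=
  comp_mpoly [tuple s (enum_val i) | i < nvar] p.

Definition chi_subst (chi : R -> algC) (a : R * R * R) : {mpoly algC[nvar]} :=
  \sum_(b : R) (chi (a.1.2 * b))%:MP * xvar (a.1.1, b, a.2).

End Jacobi.

Definition Flinear_code (F : finFieldType) n (C : {set 'rV[F]_n}) : Prop :=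
  0 \in C /\ (forall u v, u \in C -> v \in C -> u + v \in C)
  /\ (forall (c : F) u, u \in C -> c *: u \in C).

Definition Zlinear_code (R : finComNzRingType) n (C : {set 'rV[R]_n}) : Prop :=
  0 \in C /\ (forall u v, u \in C -> v \in C -> u - v \in C).

Definition chiZ (k : nat) (zeta : algC) (alpha : 'Z_k) : algC := zeta ^+ (alpha : nat).

(* the character of F_q described in the context: if
   alpha = alpha_0 + alpha_1 lambda + ... + alpha_(f-1) lambda^(f-1), alpha_i in F_p,
   then chi(alpha) = zeta_p ^ alpha_0.  (Elements of F_p are represented by
   naturals < p, embedded in F via %:R.) *)
Definition is_field_char (F : finFieldType) (p f : nat) (lambda : F) (zeta : algC)
    (chi : F -> algC) : Prop :=
  forall (alpha : F) (c : 'I_f -> 'I_p) (f_gt0 : (0 < f)%N),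
    alpha = \sum_(i < f) ((c i : nat)%:R * lambda ^+ i) ->
    chi alpha = zeta ^+ (c (Ordinal f_gt0) : nat).

From HB Require Import structures.
From mathcomp Require Import all_boot all_order all_algebra all_field.
From mathcomp Require Import mpoly.

(* The substitution x_(a1,a2,a3) := sum_b chi(a2 b) x_(a1,b,a3) turns the
   monomial of a pair (u, d) into sum_v chi(d.v) x^(u,v,w).  Summing over
   d in D, the character sum sum_(d in D) chi(d.v) is |D| when v is in the
   dual of D and 0 otherwise: chi is an additive character, and as soon as v
   is not orthogonal to D it is nontrivial on some d.v, d in D.  Over F_q,
   rescale d so that d.v = 1, where chi(1) = zeta_p != 1; additivity of chi
   there comes from expanding elements over F_p in the basis 1, lambda, ...,
   lambda^(f-1).  Over Z_k, chi(a) = 1 only for a = 0. *)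

Set Implicit Arguments. Unset Strict Implicit. Unset Printing Implicit Defensive.
Import GRing.Theory Num.Theory.
Local Open Scope ring_scope.

Section JacobiMacWilliams.
Variables (R : finComNzRingType) (n : nat).
Implicit Types (u v d w : 'rV[R]_n) (D : {set 'rV[R]_n}).

Lemma dotvDl u v w : dotv (u + v) w = dotv u w + dotv v w.
Proof. by rewrite /dotv -big_split; apply: eq_bigr => i _; rewrite mxE mulrDl. Qed.

Lemma dotvZl c u v : dotv (c *: u) v = c * dotv u v.
Proof. by rewrite /dotv mulr_sumr; apply: eq_bigr => i _; rewrite mxE mulrA. Qed.

Lemma notin_dual_code D v :
  v \notin dual_code D -> exists2 u, u \in D & dotv u v != 0.
Proof. by rewrite inE => /forallPn[u]; rewrite negb_imply => /andP[]; exists u. Qed.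

Lemma prod_xvar_hcount u v w :
  \prod_(a : R * R * R) xvar a ^+ hcount a u v w
  = \prod_(i < n) xvar (u 0 i, v 0 i, w 0 i).
Proof.
rewrite (partition_big (fun i => (u 0 i, v 0 i, w 0 i)) xpredT) //=.
apply: eq_bigr => a _; rewrite /hcount -prodr_const; symmetry.
by apply: eq_big => i; rewrite ?inE // => /eqP ->.
Qed.

Lemma subst_vars_sum (s : R * R * R -> {mpoly algC[nvar R]}) (I : finType)
    (P : pred I) (F : I -> {mpoly algC[nvar R]}) :
  subst_vars s (\sum_(i | P i) F i) = \sum_(i | P i) subst_vars s (F i).
Proof. exact: raddf_sum. Qed.

Lemma subst_vars_prod_xvar (s : R * R * R -> {mpoly algC[nvar R]}) u v w :
  subst_vars s (\prod_(i < n) xvar (u 0 i, v 0 i, w 0 i))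
  = \prod_(i < n) s (u 0 i, v 0 i, w 0 i).
Proof.
rewrite /subst_vars rmorph_prod; apply: eq_bigr => i _.
by rewrite /xvar /= comp_mpolyXU -tnth_nth tnth_mktuple enum_rankK.
Qed.

Variable chi : R -> algC.
Hypotheses (chiD : {morph chi : x y / x + y >-> x * y}) (chi0 : chi 0 = 1).

Lemma chi_dotv d v : chi (dotv d v) = \prod_(i < n) chi (d 0 i * v 0 i).
Proof. exact: big_morph. Qed.

Lemma prod_chi_subst u d w :
  \prod_(i < n) chi_subst chi (u 0 i, d 0 i, w 0 i)
  = \sum_(v : 'rV[R]_n)
      (chi (dotv d v))%:MP * \prod_(i < n) xvar (u 0 i, v 0 i, w 0 i).
Proof.
rewrite /chi_subst /= bigA_distr_bigA /=.
rewrite (reindex (fun v : 'rV[R]_n => [ffun i => v 0 i])); last first.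
  exists (fun g : {ffun 'I_n -> R} => \row_i g i) => [v _|g _].
    by apply/rowP => i; rewrite mxE ffunE.
  by apply/ffunP => i; rewrite ffunE mxE.
apply: eq_bigr => v _; rewrite chi_dotv rmorph_prod -big_split /=.
by apply: eq_bigr => i _; rewrite ffunE.
Qed.

Section CharacterSum.
Variable D : {set 'rV[R]_n}.
Hypotheses (D0 : 0 \in D) (DB : {in D &, forall a b, a - b \in D}).
Hypothesis chi_sep :
  forall v, v \notin dual_code D -> exists2 d, d \in D & chi (dotv d v) != 1.

Lemma sum_chi_dotv v :
  \sum_(d in D) chi (dotv d v) = if v \in dual_code D then #|D|%:R else 0.
Proof.
case: ifPn => vD.
  rewrite -sumr_const; apply: eq_bigr => d dD.
  by move: vD; rewrite inE => /forall_inP/(_ d dD)/eqP ->.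
have [d0 d0D chi_d0] := chi_sep vD.
set S := \sum_(d in D) _.
(* translating by d0 permutes D *)
have S_d0 : S = chi (dotv d0 v) * S.
  rewrite {1}/S (reindex_inj (addIr d0)) mulr_sumr /=.
  rewrite (eq_bigl (mem D)) => [|d]; last first.
    apply/idP/idP => [/DB/(_ d0D)|dD]; first by rewrite addrK.
    by rewrite -[d0]opprK DB // -[- d0]add0r DB.
  by apply: eq_bigr => d _; rewrite dotvDl chiD mulrC.
have : S * (1 - chi (dotv d0 v)) = 0 by rewrite mulrBr mulr1 mulrC -S_d0 subrr.
by move/eqP; rewrite mulf_eq0 subr_eq0 [1 == _]eq_sym (negbTE chi_d0) orbF => /eqP.
Qed.

Lemma Jac_dual_subst C w :
  Jac C (dual_code D) w = (#|D|%:R)^-1 *: subst_vars (chi_subst chi) (Jac C D w).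
Proof.
have D_neq0 : (#|D|%:R : algC) != 0 by rewrite pnatr_eq0 -lt0n; apply/card_gt0P; exists 0.
rewrite /Jac subst_vars_sum scaler_sumr; apply: eq_bigr => u _.
rewrite subst_vars_sum.
under [in RHS]eq_bigr => d _ do
  rewrite prod_xvar_hcount subst_vars_prod_xvar prod_chi_subst.
rewrite exchange_big scaler_sumr /=.
under [RHS]eq_bigr => v _ do rewrite -mulr_suml -rmorph_sum sum_chi_dotv.
rewrite [RHS](bigID (mem (dual_code D))) /= [X in _ + X]big1 ?addr0; last first.
  by move=> v /negbTE ->; rewrite mul0r scaler0.
apply: eq_bigr => v ->.
by rewrite prod_xvar_hcount mul_mpolyC scalerA mulVf // scale1r.
Qed.

End CharacterSum.
End JacobiMacWilliams.

Lemma prim_root_generates (F : finFieldType) (lambda : F) :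
  (#|F|.-1).-primitive_root lambda -> forall y : F, y != 0 -> exists k, y = lambda ^+ k.
Proof.
move=> lambda_prim y y_neq0.
have [|k ->] := prim_rootP lambda_prim (x := y); last by exists k.
apply: (mulfI y_neq0).
by rewrite -exprS prednK ?expf_card ?mulr1 // ltnW ?finNzRing_gt1.
Qed.

Section FieldCharacter.
Variables (F : finFieldType) (p f : nat) (lambda : F) (zeta : algC) (chi : F -> algC).
Hypotheses (p_pr : prime p) (f_gt0 : (0 < f)%N) (pF : p \in [pchar F]).
Hypotheses (cardF : #|F| = (p ^ f)%N) (lambda_prim : (#|F|.-1).-primitive_root lambda).
Hypotheses (zeta_prim : p.-primitive_root zeta) (chiE : is_field_char p f lambda zeta chi).

Lemma prim_root_expansion (alpha : F) :
  exists c : 'I_f -> 'I_p, alpha = \sum_(i < f) ((c i : nat)%:R * lambda ^+ i).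
Proof.
pose L := pPrimeCharType pF; pose x : L := lambda.
have F_adjoin : forall y : L, y \in <<1%AS; x>>%VS.
  move=> y; have [->|y_neq0] := eqVneq y 0; first exact: mem0v.
  have [k ->] := prim_root_generates lambda_prim y_neq0.
  elim: k => [|k IHk]; first by rewrite expr0 mem1v.
  by rewrite exprS memvM // memv_adjoin.
have deg_x : (adjoin_degree 1%AS x <= f)%N.
  have := dim_Fadjoin 1%AS x; rewrite dimv1 muln1 => <-.
  by rewrite (leq_trans (dimvS (subvf _))) // pprimeChar_dimf /= cardF pfactorK.
pose P := Fadjoin_poly 1%AS x alpha.
have P_Fp i : exists c : 'I_p, P`_i = (c : nat)%:R.
  have /vlineP[a ->] := polyOverP (Fadjoin_polyOver 1%AS x alpha) i.
  by exists (cast_ord (Fp_cast p_pr) a); exact: mulr1.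
have [c Pc] := fin_all_exists (fun i : 'I_f => P_Fp i).
exists c; rewrite -[LHS](Fadjoin_poly_eq (F_adjoin alpha)).
rewrite (horner_coef_wide _ (leq_trans (size_Fadjoin_poly _ _ _) deg_x)).
by apply: eq_bigr => i _; rewrite Pc.
Qed.

Lemma field_char_expansion (c : 'I_f -> 'I_p) :
  chi (\sum_(i < f) ((c i : nat)%:R * lambda ^+ i)) = zeta ^+ c (Ordinal f_gt0).
Proof. exact: chiE. Qed.

Lemma field_charD : {morph chi : x y / x + y >-> x * y}.
Proof.
move=> x y.
have [c1 ->] := prim_root_expansion x; have [c2 ->] := prim_root_expansion y.
pose c i := Ordinal (ltn_pmod (c1 i + c2 i) (prime_gt0 p_pr)).
have -> : \sum_(i < f) ((c1 i : nat)%:R * lambda ^+ i)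
          + \sum_(i < f) ((c2 i : nat)%:R * lambda ^+ i)
          = \sum_(i < f) ((c i : nat)%:R * lambda ^+ i).
  rewrite -big_split; apply: eq_bigr => i _.
  by rewrite /= GRing.natr_mod_pchar // natrD mulrDl.
by rewrite !field_char_expansion /= prim_expr_mod // exprD.
Qed.

Lemma field_char0 : chi 0 = 1.
Proof.
pose c (i : 'I_f) := Ordinal (prime_gt0 p_pr).
have -> : 0 = \sum_(i < f) ((c i : nat)%:R * lambda ^+ i).
  by rewrite big1 // => i _; rewrite mul0r.
by rewrite field_char_expansion.
Qed.

Lemma field_char1 : chi 1 != 1.
Proof.
pose c (i : 'I_f) := Ordinal (leq_ltn_trans (leq_b1 (i == 0 :> nat)) (prime_gt1 p_pr)).
have -> : 1 = \sum_(i < f) ((c i : nat)%:R * lambda ^+ i).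
  rewrite (bigD1 (Ordinal f_gt0)) //= big1 ?addr0 ?mul1r // => i.
  by rewrite -val_eqE /= => /negbTE ->; rewrite mul0r.
rewrite field_char_expansion /= -(prim_order_dvd zeta_prim).
by rewrite dvdn1 eqn_leq leqNgt prime_gt1.
Qed.

End FieldCharacter.

Section ZpCharacter.
Variables (k : nat) (zeta : algC).
Hypotheses (k_gt1 : (1 < k)%N) (zeta_prim : k.-primitive_root zeta).

Lemma chiZD : {morph @chiZ k zeta : x y / x + y >-> x * y}.
Proof.
move=> x y; rewrite /chiZ -exprD -(prim_expr_mod zeta_prim) /=.
by rewrite modn_dvdm ?Zp_cast // prim_expr_mod.
Qed.

Lemma chiZ_eq1 (a : 'Z_k) : (chiZ zeta a == 1) = (a == 0).
Proof.
rewrite /chiZ -(prim_order_dvd zeta_prim) -val_eqE /=.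
by rewrite /dvdn modn_small // -[k in (_ < k)%N]Zp_cast.
Qed.

End ZpCharacter.

Theorem theorem3p3 :
  (* Case R = F_q, q = p^f *)
  (forall (F : finFieldType) (p f : nat) (lambda : F) (zeta : algC) (chi : F -> algC)
          (n : nat) (C D : {set 'rV[F]_n}) (w : 'rV[F]_n),
      prime p -> (0 < f)%N -> p \in [pchar F] -> #|F| = (p ^ f)%N ->
      (* lambda is a root of a primitive irreducible polynomial of degree f over F_p,
         i.e. lambda generates the multiplicative group F_q^* *)
      (#|F|.-1).-primitive_root lambda ->
      p.-primitive_root zeta ->
      is_field_char p f lambda zeta chi ->
      Flinear_code C -> Flinear_code D ->
      Jac C (dual_code D) w =
      (#|D|%:R)^-1 *: subst_vars (chi_subst chi) (Jac C D w))
  /\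
  (* Case R = Z_k, k >= 2 *)
  (forall (k : nat) (zeta : algC) (n : nat) (C D : {set 'rV['Z_k]_n}) (w : 'rV['Z_k]_n),
      (1 < k)%N ->
      k.-primitive_root zeta ->
      Zlinear_code C -> Zlinear_code D ->
      Jac C (dual_code D) w =
      (#|D|%:R)^-1 *: subst_vars (chi_subst (chiZ zeta)) (Jac C D w)).
Proof.
split.
  move=> F p f lambda zeta chi n C D w p_pr f_gt0 pF cardF lambda_prim zeta_prim chiE
    _ [D0 [DD DZ]].
  apply: Jac_dual_subst => //.
  - exact: field_charD pF cardF lambda_prim zeta_prim chiE.
  - exact: field_char0 chiE.
  - by move=> a b aD bD; rewrite -scaleN1r DD ?DZ.
  move=> v /notin_dual_code[u uD uv_neq0].
  exists ((dotv u v)^-1 *: u); first exact: DZ.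
  by rewrite dotvZl mulVf // (field_char1 p_pr f_gt0 zeta_prim chiE).
move=> k zeta n C D w k_gt1 zeta_prim _ [D0 DB].
apply: Jac_dual_subst => //; first exact: chiZD.
move=> v /notin_dual_code[u uD uv_neq0].
by exists u; rewrite ?chiZ_eq1.
Qed.
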